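(* Let $A$ be a first countable locally convex topological vector space over $\mathbb C$ and give $A^\vee$ the topology of uniform convergence on compact sets. Then on $\mathrm{Max}\,A$ the lower Vietoris topology is finer than the topology generated by the sets $\{V\in\mathrm{Max}\,A: F(V)\cap K'=\emptyset\}$ with $K'\subset A^\vee$ compact.
   Context: $\mathrm{Max}\,A$ is the set of closed subspaces of $A$; its lower Vietoris topology is generated by $\{V:V\cap U\ne\emptyset\}$, $U\subset A$ open. $A^\vee$ is the continuous dual with subbasis $\{\phi:\phi(K)\subset U\}$, $K\subset A$ compact, $U\subset\mathbb C$ open; $F(V)=\{\phi\in A^\vee:\phi|_V=0\}$. *)

From HB Require Import structures.
From mathcomp Require Import all_boot all_order all_algebra.
From mathcomp Require Import all_classical all_reals all_analysis.
From mathcomp Require Import complex.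
Set Implicit Arguments. Unset Strict Implicit. Unset Printing Implicit Defensive.
Import Order.TTheory GRing.Theory Num.Theory.
Import numFieldTopology.Exports.
Local Open Scope classical_set_scope.
Local Open Scope ring_scope.

(** The complex numbers: [R[i]] for a real type [R], with its norm topology
    (the [^o] alias carries the topology of the numFieldType). *)
Notation Cplx R := (R[i])^o.

Definition first_countable (T : topologicalType) : Prop :=
  forall x : T, exists2 B : set_system T, countable B &
    (forall b, B b -> nbhs x b) /\
    (forall U, nbhs x U -> exists2 b, B b & b `<=` U).

(** Topology on a subset [X] of [T] generated by the subbasis [S]:
    [W] is open iff [W] is contained in [X] and every point of [W] lies in
    a finite intersection of members of [S] (traced on [X]) contained in [W]
    (the empty intersection being [X] itself). *)
Definition gen_open {T : Type} (X : set T) (S : set_system T) (W : set T) :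
    Prop :=
  W `<=` X /\
  forall x, W x -> exists F : set_system T,
    [/\ finite_set F, F `<=` S, (forall b, F b -> b x) &
        X `&` (\bigcap_(b in F) b) `<=` W].

Definition finer_on {T : Type} (X : set T) (S1 S2 : set_system T) : Prop :=
  forall W, gen_open X S2 W -> gen_open X S1 W.

Section MaxDual.
Context {R : realType} (A : tvsType R[i]).

Definition lin_subspace (V : set A) : Prop :=
  V 0 /\ forall (a : R[i]) (x y : A), V x -> V y -> V (a *: x + y).

Definition MaxA : set (set A) := [set V | closed V /\ lin_subspace V].

Definition lower_vietoris_subbasis : set_system (set A) :=
  [set S | exists U : set A, open U /\
      S = [set V | MaxA V /\ V `&` U !=set0]].

Definition CO := {compact-open, A -> Cplx R}.

(** The continuous dual A^v, as a subset of CO (its topology is the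
    subspace topology, i.e. the topology of the given subbasis). *)
Definition dual : set CO :=
  [set phi : CO | (forall (a : R[i]) (x y : A),
                     phi (a *: x + y) = a * phi x + phi y)
                  /\ continuous (phi : A -> Cplx R)].

Definition Fann (V : set A) : set CO :=
  [set phi | dual phi /\ forall v, V v -> phi v = 0].

Definition dual_compact_subbasis : set_system (set A) :=
  [set S | exists K' : set CO,
      [/\ K' `<=` dual, @compact (subspace dual) K' &
          S = [set V | MaxA V /\ Fann V `&` K' = set0]]].

End MaxDual.

From HB Require Import structures.
From mathcomp Require Import all_boot all_order all_algebra.
From mathcomp Require Import all_classical all_reals all_analysis.
From mathcomp Require Import complex finmap.
Import numFieldTopology.Exports.
Import Order.TTheory GRing.Theory Num.Theory.
Local Open Scope classical_set_scope.
Local Open Scope ring_scope.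

(* Let V0 be a closed subspace and K' a compact subset of the dual with F(V0)
   and K' disjoint.  Each phi in K' is nonzero at some v in V0.  As A is first
   countable, the compact family K' is equicontinuous at v, so there are a
   compact-open neighbourhood N of phi and an open W containing v such that no
   psi in K' meeting N vanishes anywhere on W.  Finitely many such N cover K';
   then every closed subspace V meeting all the corresponding sets W has F(V)
   disjoint from K', which gives a lower Vietoris neighbourhood of V0 inside
   the basic open set defined by K'. *)

Definition countable_nbhs_base {T : topologicalType} (x : T) : Prop :=
  exists2 B : set_system T, countable B &
    (forall b, B b -> nbhs x b) /\
    (forall U, nbhs x U -> exists2 b, B b & b `<=` U).

Lemma countable_nbhs_base_shrinking {T : topologicalType} (x : T) :
  countable_nbhs_base x ->
  exists U : nat -> set T, (forall n, nbhs x (U n)) /\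
    forall u : nat -> T, (forall n, U n (u n)) -> u @ \oo --> x.
Proof.
case=> B /countable_injP [f finj] [Bnbhs Bbase].
(* [e n] is the base element of index [n] under [f], or [setT] if none. *)
pose e n := \bigcap_(b in [set b | B b /\ f b = n]) b.
have e_nbhs n : nbhs x (e n).
  have [[b [Bb fb]]|nob] := pselect (exists b, B b /\ f b = n).
    apply: filterS (Bnbhs _ Bb) => y yb c [Bc fc].
    have -> : c = b by apply: finj; rewrite ?in_setE //; congruence.
    exact: yb.
  rewrite (_ : e n = setT); first exact: filterT.
  by apply/seteqP; split => // y _ c [Bc fc]; exfalso; apply: nob; exists c.
pose U := fix U n := if n is k.+1 then U k `&` e k.+1 else e 0.
have U_nbhs n : nbhs x (U n).
  by elim: n => [|n IH] /=; [exact: e_nbhs | exact: filterI].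
have Ue n : U n `<=` e n by case: n => [|n] //= y [].
have U_decr n m : (n <= m)%N -> U m `<=` U n.
  elim: m => [|m IH]; first by rewrite leqn0 => /eqP ->.
  rewrite leq_eqVlt => /predU1P [-> // | ].
  by rewrite ltnS => /IH h y [/h].
exists U; split => // u Uu W /Bbase [b Bb bW]; exists (f b) => // n /= bn.
by apply/bW; exact: Ue _ _ (U_decr _ _ bn _ (Uu n)) b (conj Bb erefl).
Qed.

Lemma compact_cvg_range {T : topologicalType} (u : nat -> T) (x : T) :
  u @ \oo --> x -> compact ([set x] `|` range u).
Proof.
move=> ux F PF FS.
have [clx|nclx] := pselect (cluster F x); first by exists x; split => //; left.
have [A [B [FA nB AB]]] : exists A B, [/\ F A, nbhs x B & A `&` B = set0].
  apply: contra_notP nclx => H A B FA nB; apply/set0P/negP => /eqP AB.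
  by apply: H; exists A, B.
have [m _ Bu] := ux B nB.
pose head := u @` [set k | (k < m)%N].
have F_head : F head.
  apply: filterS (filterI FS FA) => y [[->|[k _ <-]] Ay].
    have : (A `&` B) x by split => //; exact: nbhs_singleton.
    by rewrite AB.
  have [km|mk] := ltnP k m; first by exists k.
  have : (A `&` B) (u k) by split => //; exact: Bu.
  by rewrite AB.
have [y [[k _ <-] cly]] :=
  finite_compact (finite_image _ (finite_II m)) PF F_head.
by exists (u k); split => //; right; exists k.
Qed.

Lemma compact_equicontinuous_at {K : numFieldType} {T : topologicalType}
    {Y : pseudoMetricNormedZmodType K} {C : set {compact-open, T -> Y}}
    {x : T} {e : K} :
  countable_nbhs_base x -> compact C ->
  (forall f, C f -> {for x, continuous (f : T -> Y)}) -> 0 < e ->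
  \forall y \near x, forall f, C f -> ball (f x) e (f y).
Proof.
move=> /countable_nbhs_base_shrinking [U [Un Ucvg]] cC cont e0.
(* Otherwise pick f_n in C and u_n in U n with f_n u_n far from f_n x.  A
   cluster point chi of (f_n) maps the compact set {x} U {u_n | n >= m} into
   ball (chi x) (e/2); this compact-open condition is then met by some f_k
   with k >= m, contradicting the triangle inequality. *)
apply: contrapT => notnear.
have bad n : exists p : {compact-open, T -> Y} * T,
    [/\ C p.1, U n p.2 & ~ ball (p.1 x) e (p.1 p.2)].
  apply: contrapT => Hn; apply: notnear; apply: filterS (Un n) => y Uy f Cf.
  by apply: contrapT => nb; apply: Hn; exists (f, y).
have [g gP] := choice bad.
pose psi n := (g n).1; pose u n := (g n).2.
have ux : u @ \oo --> x by apply: Ucvg => n; case: (gP n).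
have [chi [Cchi clchi]] := cC (psi @ \oo) (fmap_proper_filter _ _)
   (ex_intro2 _ _ 0%N I (fun n _ => let: And3 h _ _ := gP n in h)).
have e20 : 0 < e / 2 by rewrite divr_gt0.
have [m _ chi_near] := ux _ (cont _ Cchi _ (nbhsx_ballx (chi x) (e/2) e20)).
pose S := [set x] `|` range (fun k => u (k + m)%N).
have cS : compact S.
  apply: compact_cvg_range => W /ux [k _ Wu]; exists k => // n /= kn.
  by apply: Wu; apply: leq_trans kn (leq_addr _ _).
pose N := [set g : {compact-open, T -> Y} | g @` S `<=` ball (chi x) (e/2)].
have oN : open N by apply: compact_open_open => //; exact: ball_open.
have Nchi : N chi.
  move=> y [z [->|[k _ <-]] <-]; first exact: ballxx.
  by apply: chi_near; rewrite /= leq_addl.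
have [_ [[k mk <-] Nk]] := clchi (psi @` [set k | (m <= k)%N]) N
  (ex_intro2 _ _ m I (fun n mn => ex_intro2 _ _ n mn erefl))
  (open_nbhs_nbhs (conj oN Nchi)).
have b1 : ball (chi x) (e/2) (psi k x) by apply: Nk; exists x => //; left.
have b2 : ball (chi x) (e/2) (psi k (u k)).
  by apply: Nk; exists (u k) => //; right; exists (k - m)%N; rewrite ?subnK.
have := ball_triangle (ball_sym b1) b2; rewrite -splitr.
by case: (gP k).
Qed.

Lemma compact_nonvanishing_nbhs {K : numFieldType} {T : topologicalType}
    {Y : pseudoMetricNormedZmodType K} {C : set {compact-open, T -> Y}}
    {phi : {compact-open, T -> Y}} {x : T} :
  countable_nbhs_base x -> compact C ->
  (forall f, C f -> {for x, continuous (f : T -> Y)}) -> phi x != 0 ->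
  exists (N : set {compact-open, T -> Y}) (W : set T),
    [/\ open N, N phi, open W, W x &
        forall psi y, C psi -> N psi -> W y -> psi y != 0].
Proof.
move=> xbase cC cont phix0; pose e := `|phi x| / 2.
have e0 : 0 < e by rewrite divr_gt0 // normr_gt0.
have := compact_equicontinuous_at xbase cC cont e0.
rewrite /prop_near1 nbhsE => -[W [oW Wx] WC].
exists [set g | g @` [set x] `<=` ball (phi x) e], W; split => //.
- by apply: compact_open_open; [exact: compact_set1 | exact: ball_open].
- by move=> _ [_ -> <-]; exact: ballxx.
move=> psi y Cpsi Npsi Wy; apply/eqP => psiy0.
have phi_psi : ball (phi x) e (psi x) by apply: Npsi; exists x.
have := ball_triangle phi_psi (WC _ Wy _ Cpsi).
by rewrite psiy0 /e -splitr -ball_normE /ball_ /= subr0 ltxx.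
Qed.

Definition gen_nbhs {T : Type} (X : set T) (S : set_system T) (x : T)
    (W : set T) : Prop :=
  exists F : set_system T, [/\ finite_set F, F `<=` S, (forall b, F b -> b x) &
    X `&` \bigcap_(b in F) b `<=` W].

Lemma finer_on_gen_nbhs {T : Type} (X : set T) (S1 S2 : set_system T) :
  (forall S x, S2 S -> S x -> gen_nbhs X S1 x S) -> finer_on X S1 S2.
Proof.
move=> S2_nbhs W [WX W_nbhs]; split => // x Wx.
have [F [finF FS2 Fx FW]] := W_nbhs x Wx.
have pick S : exists G : set_system T, F S -> [/\ finite_set G, G `<=` S1,
    (forall b, G b -> b x) & X `&` \bigcap_(b in G) b `<=` S].
  have [FS|nFS] := pselect (F S); last by exists set0 => /nFS.
  by have [G ?] := S2_nbhs S x (FS2 _ FS) (Fx _ FS); exists G.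
have [g gP] := choice pick.
exists (\bigcup_(S in F) g S); split.
- by apply: (bigcup_finite finF) => S /gP[].
- by move=> b [S /gP[_ + _ _]]; apply.
- by move=> b [S /gP[_ _ + _]]; apply.
move=> y [Xy gy]; apply: FW; split => // S FS.
by case: (gP S FS) => _ _ _; apply; split => // b gb; apply: gy; exists S.
Qed.

Section MaxDual.
Context {R : realType} (A : tvsType R[i]).

Lemma Fann_disjoint_nonzero {V : set A} {K' : set (CO A)} {phi : CO A} :
  K' `<=` @dual R A -> Fann V `&` K' = set0 -> K' phi ->
  exists2 v, V v & phi v != 0.
Proof.
move=> K'dual FK' K'phi; apply: contrapT => phiV0.
have : (Fann V `&` K') phi.
  split => //; split => [|v Vv]; first exact: K'dual.
  by apply: contrapT => /eqP phiv; apply: phiV0; exists v.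
by rewrite FK'.
Qed.

Lemma dual_compact_subbasis_gen_nbhs : first_countable A ->
  forall S V0, @dual_compact_subbasis R A S -> S V0 ->
  gen_nbhs (@MaxA R A) (@lower_vietoris_subbasis R A) V0 S.
Proof.
move=> fcA _ V0 [K' [K'dual cK' ->]] [MV0 FV0].
have cK : compact K'.
  by move: cK'; rewrite -(setIidl K'dual) => /compact_subspaceIP.
have sep phi : exists p : set (CO A) * set A, K' phi ->
    [/\ open p.1, p.1 phi, open p.2, V0 `&` p.2 !=set0 &
        forall psi u, K' psi -> p.1 psi -> p.2 u -> psi u != 0].
  have [K'phi|nK'phi] := pselect (K' phi); last first.
    by exists (set0, set0) => /nK'phi.
  have [v V0v phiv] := Fann_disjoint_nonzero K'dual FV0 K'phi.
  have [N [W [oN Nphi oW Wv NW]]] := compact_nonvanishing_nbhs (fcA v) cK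
    (fun f K'f => (K'dual _ K'f).2 v) phiv.
  by exists (N, W) => _; split => //; exists v.
have [p pP] := choice sep.
move: cK; rewrite compact_cover => /(_ _ K' (fun phi => (p phi).1)).
case=> [phi /pP[] // | psi K'psi | D DK' cover].
  by exists psi => //; case: (pP psi K'psi).
have {}DK' phi : [set` D] phi -> K' phi by move=> /DK'; rewrite in_setE.
exists [set [set V | MaxA V /\ V `&` (p phi).2 !=set0] | phi in [set` D]].
split.
- exact/finite_image/finite_fset.
- by move=> _ [phi /DK'/pP[_ _ ? _ _] <-]; exists (p phi).2.
- by move=> _ [phi /DK'/pP[_ _ _ ? _] <-]; split.
move=> V [MV VD]; split => //; apply/seteqP; split => // psi [[_ Fpsi] K'psi].
have [phi Dphi psi_p] := cover psi K'psi.
have [_ [u [Vu pu]]] := VD _ (ex_intro2 _ _ phi Dphi erefl).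
have [_ _ _ _ /(_ psi u K'psi psi_p pu)] := pP phi (DK' _ Dphi).
by rewrite Fpsi // eqxx.
Qed.

End MaxDual.

Theorem lemma7p10 (R : realType) (A : tvsType R[i]) :
  first_countable A ->
  finer_on (@MaxA R A) (@lower_vietoris_subbasis R A)
    (@dual_compact_subbasis R A).
Proof.
by move=> fcA; apply: finer_on_gen_nbhs; exact: dual_compact_subbasis_gen_nbhs.
Qed.
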